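(* In the theory $\mathfrak{T}$, the following holds for every formula $\Phi(\alpha,\beta)$ (possibly with parameters): $$\forall X\Big(\forall\alpha\in X\,\exists!\beta\,\Phi(\alpha,\beta)\ \Rightarrow\ \exists Z\,\forall\gamma\big(\gamma\in Z\iff\exists\xi\,(\xi\in X\wedge\Phi(\xi,\gamma))\big)\Big).$$
   Context: The theory $\mathfrak{T}$ is set up as follows. The universe consists of ''things'', each of which is either a set or a function on a set. Variables $\alpha,\beta,\gamma,\eta,\xi,\zeta,\dots$ range over all things and $X,Y,Z,\dots$ range over sets. For a set $X$, the symbols $f_X,g_X,F_X,\dots$ range over functions on $X$. The primitive predicates are $\alpha\in\beta$, $\alpha=\beta$, the ternary predicate $f:Y\twoheadrightarrow Z$ (read ''$f$ has domain $Y$ and codomain $Z$'') and the ternary predicate $f:\alpha\mapsto\beta$ (read ''$f$ maps $\alpha$ to $\beta$''). Notation: $\alpha^+$ is the singleton $\{\alpha\}$ and $\langle\alpha,\beta\rangle:=\{\alpha,\{\alpha,\beta\}\}$. An ur-function is a function on a singleton $\alpha^+$. For a function $f$ and an argument $\alpha$ with a unique $\beta$ such that $f:\alpha\mapsto\beta$, this $\beta$ is written $f(\alpha)$. Axioms of $\mathfrak{T}$: - Extensionality for sets. - No function on a set is a set. - A set has no domain or codomain and maps nothing to anything. - There is an empty set $\emptyset$. - Pairing: for all $\alpha,\beta$ the set $\{\alpha,\beta\}$ exists. - Union (sum set). - Power set. - Infinity: $\omega$ is the set of finite Zermelo ordinals, where $0=\emptyset$ and $n+1=n^+$. - Regularity.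 - A function on a set has no elements. - (GEN-F) For nonempty $X$, every $f_X$ satisfies $f_X:Y\twoheadrightarrow Z$ for some sets $Y,Z$, and for each $\alpha\in Y$ there is a unique $\beta$ with $f_X:\alpha\mapsto\beta$. - $f_X$ has no domain other than $X$. - $f_X:\alpha\mapsto\beta$ implies $\alpha\in X$. - For nonempty $X$, if $f_X:X\twoheadrightarrow\beta$ then $\beta$ is the image set $f_X[X]=\{\gamma:\exists\eta\in X\,(f_X:\eta\mapsto\gamma)\}$. - (INV) For nonempty $X$ with $f_X:X\twoheadrightarrow Y$, for every $\beta$ the set $\{\alpha\in X: f_X:\alpha\mapsto\beta\}$ exists. - (EXT-F) $f_X=g_Y$ iff $X=Y$ and, for all $\alpha,\beta$, $f_X:\alpha\mapsto\beta \iff g_Y:\alpha\mapsto\beta$. - There is an inactive function $1_\emptyset$ with $1_\emptyset:\emptyset\twoheadrightarrow\emptyset$ that maps nothing. - (UFA) For all $\alpha,\beta$ there is an ur-function $f_{\alpha^+}$ with $f_{\alpha^+}:\alpha^+\twoheadrightarrow\beta^+$ and $f_{\alpha^+}:\alpha\mapsto\beta$. - (REG-F) If $f_X:X\twoheadrightarrow Y$, then for every $\alpha$, neither $f_X:f_X\mapsto\alpha$ nor $f_X:\alpha\mapsto f_X$. - (SUM-F, nonstandard, with a multiple quantifier over families) For every nonempty set $X$ and every family $(f_{\alpha^+})_{\alpha\in X}$ that assigns to each $\alpha\in X$ an ur-function $f_{\alpha^+}$ on $\alpha^+$, there exist a function $F_X$ and a set $Y$ with $F_X:X\twoheadrightarrow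 Y$ and $F_X:\alpha\mapsto f_{\alpha^+}(\alpha)$ for every $\alpha\in X$. *)

(* A shallow (semantic) embedding of the theory T:
   a model of T is a carrier type with the primitive predicates and the axioms. *)
From Stdlib Require Import Classical.

Section Notions.
Variable U : Type.
Variable isSet : U -> Prop.
Variable mem : U -> U -> Prop.

Definition isSing (S a : U) : Prop := isSet S /\ forall x, mem x S <-> x = a.
Definition isEmpty (S : U) : Prop := isSet S /\ forall x, ~ mem x S.
Definition nonempty (S : U) : Prop := exists x, mem x S.
End Notions.

Record T_model : Type := {
  U : Type;
  isSet : U -> Prop;
  funOn : U -> U -> Prop;
  mem : U -> U -> Prop;
  arr : U -> U -> U -> Prop;         (* arr f Y Z : f : Y ->> Z *)
  maps : U -> U -> U -> Prop;

  ax_sorts : forall a, isSet a \/ exists X, isSet X /\ funOn a X;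
  ax_funOn_set : forall f X, funOn f X -> isSet X;
  ax_ext : forall X Y, isSet X -> isSet Y ->
           (forall z, mem z X <-> mem z Y) -> X = Y;
  ax_fun_not_set : forall f X, funOn f X -> ~ isSet f;
  ax_set_no_arr : forall a Y Z, isSet a -> ~ arr a Y Z;
  ax_set_no_maps : forall a x y, isSet a -> ~ maps a x y;
  ax_empty : exists e, isEmpty U isSet mem e;
  ax_pair : forall a b, exists P, isSet P /\ forall x, mem x P <-> x = a \/ x = b;
  ax_union : forall X, isSet X -> exists S, isSet S /\
             forall x, mem x S <-> exists Y, mem Y X /\ mem x Y;
  ax_power : forall X, isSet X -> exists P, isSet P /\
             forall Y, mem Y P <-> (isSet Y /\ forall z, mem z Y -> mem z X);
  (* infinity: omega, the set of finite Zermelo ordinals (0 = empty, n+1 = {n}),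
     i.e. the least set containing the empty set and closed under a |-> {a} *)
  ax_infinity : exists W, isSet W /\
     (forall e, isEmpty U isSet mem e -> mem e W) /\
     (forall a s, mem a W -> isSing U isSet mem s a -> mem s W) /\
     (forall V, isSet V ->
        (forall e, isEmpty U isSet mem e -> mem e V) ->
        (forall a s, mem a V -> isSing U isSet mem s a -> mem s V) ->
        forall x, mem x W -> mem x V);
  ax_reg : forall X, isSet X -> nonempty U mem X ->
           exists y, mem y X /\ forall z, mem z y -> ~ mem z X;
  ax_fun_no_elem : forall f X x, funOn f X -> ~ mem x f;
  ax_genF : forall f X, funOn f X -> nonempty U mem X ->
     exists Y Z, isSet Y /\ isSet Z /\ arr f Y Z /\
       forall a, mem a Y -> exists! b, maps f a b;
  ax_dom : forall f X Y Z, funOn f X -> arr f Y Z -> Y = X;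
  ax_maps_dom : forall f X a b, funOn f X -> maps f a b -> mem a X;
  ax_image : forall f X b, funOn f X -> nonempty U mem X -> arr f X b ->
     isSet b /\ forall g, mem g b <-> exists h, mem h X /\ maps f h g;
  ax_inv : forall f X Y, funOn f X -> nonempty U mem X -> arr f X Y ->
     forall b, exists S, isSet S /\ forall a, mem a S <-> (mem a X /\ maps f a b);
  ax_extF : forall f X g Y, funOn f X -> funOn g Y ->
     (f = g <-> (X = Y /\ forall a b, maps f a b <-> maps g a b));
  ax_one_empty : forall e, isEmpty U isSet mem e ->
     exists i, funOn i e /\ arr i e e /\ forall a b, ~ maps i a b;
  ax_UFA : forall a b A B, isSing U isSet mem A a -> isSing U isSet mem B b ->
     exists f, funOn f A /\ arr f A B /\ maps f a b;
  ax_regF : forall f X Y, funOn f X -> arr f X Y ->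
     forall a, ~ maps f f a /\ ~ maps f a f;
  (* SUM-F, with the family quantifier read as ranging over all
     (meta-level) assignments alpha |-> f_{alpha^+} *)
  ax_sumF : forall X (fam : U -> U), isSet X -> nonempty U mem X ->
     (forall a, mem a X -> exists A, isSing U isSet mem A a /\ funOn (fam a) A) ->
     exists F Y, funOn F X /\ isSet Y /\ arr F X Y /\
       forall a b, mem a X -> (forall b', maps (fam a) a b' <-> b' = b) -> maps F a b
}.

(* Replacement is reduced to SUM-F.  By UFA every [a] has an ur-function on
   [{a}] sending [a] to any prescribed value; choosing one for each [a] in [X]
   gives a family to which SUM-F applies, producing [F : X ->> Y] that sends
   each [a] to that value.  The codomain [Y] of [F] is its image set. *)
From Stdlib Require Import Classical ClassicalEpsilon.

Section Replacement.
Variable M : T_model.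

Local Notation isSing := (isSing (U M) (isSet M) (mem M)).
Local Notation nonempty := (nonempty (U M) (mem M)).

Lemma singleton_exists (a : U M) : exists A, isSing A a.
Proof.
  destruct (ax_pair M a a) as [A [HA Hmem]].
  exists A; split; [exact HA |].
  intro x; rewrite Hmem; tauto.
Qed.

Lemma maps_functional (f X a b b' : U M) :
  funOn M f X -> maps M f a b -> maps M f a b' -> b = b'.
Proof.
  intros Hf Hb Hb'.
  assert (Ha : mem M a X) by exact (ax_maps_dom M _ _ _ _ Hf Hb).
  destruct (ax_genF M f X Hf (ex_intro _ a Ha)) as [Y [Z [_ [_ [Harr Huniq]]]]].
  rewrite (ax_dom M _ _ _ _ Hf Harr) in Huniq.
  destruct (Huniq a Ha) as [c [_ Hc]].
  rewrite <- (Hc b Hb); exact (Hc b' Hb').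
Qed.

Lemma ur_function_exists (a b : U M) :
  exists f, exists A, isSing A a /\ funOn M f A /\ maps M f a b.
Proof.
  destruct (singleton_exists a) as [A HA].
  destruct (singleton_exists b) as [B HB].
  destruct (ax_UFA M a b A B HA HB) as [f [Hf [_ Hab]]].
  exists f, A; auto.
Qed.

Lemma replacement_fun (G : U M -> U M) (X : U M) :
  isSet M X -> exists Z, isSet M Z /\
    forall g, mem M g Z <-> exists xi, mem M xi X /\ G xi = g.
Proof.
  intro HX.
  destruct (classic (nonempty X)) as [Hne | Hempty].
  2:{ destruct (ax_empty M) as [e [He Hnomem]].
      exists e; split; [exact He |].
      intro g; split; [intro Hg; destruct (Hnomem g Hg) |].
      intros [xi [Hxi _]]; destruct (Hempty (ex_intro _ xi Hxi)). }
  pose (ur a f := exists A, isSing A a /\ funOn M f A /\ maps M f a (G a)).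
  pose (fam a := epsilon (inhabits a) (ur a)).
  assert (Hfam : forall a, ur a (fam a))
    by (intro a; apply epsilon_spec, ur_function_exists).
  destruct (ax_sumF M X fam HX Hne) as [F [Y [HF [_ [Harr HFfam]]]]].
  { intros a _; destruct (Hfam a) as [A [HA [Hf _]]]; eauto. }
  assert (HFG : forall a, mem M a X -> maps M F a (G a)).
  { intros a Ha; apply (HFfam a (G a) Ha); intro b'.
    destruct (Hfam a) as [A [_ [Hf Hfa]]].
    split; [intro Hb'; exact (maps_functional _ _ _ _ _ Hf Hb' Hfa) |].
    intros ->; exact Hfa. }
  destruct (ax_image M F X Y HF Hne Harr) as [HY Himg].
  exists Y; split; [exact HY |].
  intro g; rewrite Himg; split; intros [xi [Hxi Hg]]; exists xi; split; auto.
  - exact (maps_functional _ _ _ _ _ HF (HFG xi Hxi) Hg).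
  - rewrite <- Hg; exact (HFG xi Hxi).
Qed.

End Replacement.

Theorem mainTheorem4 :
  forall (M : T_model) (Phi : U M -> U M -> Prop) (X : U M),
    isSet M X ->
    (forall a, mem M a X -> exists! b, Phi a b) ->
    exists Z, isSet M Z /\
      forall g, mem M g Z <-> exists xi, mem M xi X /\ Phi xi g.
Proof.
  intros M Phi X HX Huniq.
  pose (G a := epsilon (inhabits a) (Phi a)).
  assert (HG : forall a, mem M a X -> forall g, Phi a g <-> G a = g).
  { intros a Ha g.
    destruct (Huniq a Ha) as [b [Hb Hb_unique]].
    assert (HGa : Phi a (G a)) by (apply epsilon_spec; exists b; exact Hb).
    split; intro H.
    - rewrite <- (Hb_unique _ HGa); exact (Hb_unique _ H).
    - rewrite <- H; exact HGa. }
  destruct (replacement_fun M G X HX) as [Z [HZ HZmem]].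
  exists Z; split; [exact HZ |].
  intro g; rewrite HZmem; split; intros [xi [Hxi Hg]]; exists xi; split;
    try apply (HG xi Hxi); assumption.
Qed.
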